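(* Let $\mathcal{P}$ be a finite poset of composition length at least $3$ whose Hasse diagram is a rooted tree, and assume the root has a unique successor. Let $M$ be a $k\mathcal{P}$-module such that $[M]\in\mathsf{G}^0(\mathcal{P},k)$, i.e. $\partial_0^*M\cong\partial_1^*M$ as $k\mathcal{G}^{\mathcal{P}}_1$-modules. Then $$M\cong\underline{k}^{\oplus n}\oplus S_{\mathcal{P}}^{\oplus d}$$ for some non-negative integers $n,d$; in fact $n=\operatorname{rank}M(x<y)$ for any strict relation $x<y$ in $\mathcal{P}$ and $d=\dim_k\ker M(x<y)$ for any non-maximal $x$ and any $y>x$.
   Context: A poset is viewed as a category with a unique morphism $x\to y$ iff $x\le y$; a $k\mathcal{P}$-module is a functor to finite-dimensional $k$-vector spaces ($k$ a field). The composition length is the maximal length of a chain of covering relations. The Hasse diagram is a rooted tree means there is a unique minimal element (the root) and every other element has exactly one lower cover; a successor of $x$ is an upper cover of $x$. $\underline{k}$ is the constant module with value $k$ and identity maps; $S_{\mathcal{P}}$ is the module with value $k$ at every element and zero maps for all strict relations. $\mathcal{G}^{\mathcal{P}}_1$ is the poset of strict relations $a<b$ (written $[a<b]$) with $[a<b]\le[c<d]$ iff they are equal or $b\le c$; $\partial_0[a<b]=b$, $\partial_1[a<b]=a$, $F^*M=M\circ F$; $\mathsf{G}^0(\mathcal{P},k)$ is the kernel of $\partial_0^*-\partial_1^*$ on the split Grothendieck group of $k\mathcal{P}$-modules. *)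

From HB Require Import structures.
From mathcomp Require Import all_boot all_order all_algebra.
Set Implicit Arguments. Unset Strict Implicit. Unset Printing Implicit Defensive.
Import Order.TTheory GRing.Theory.
Local Open Scope ring_scope.

(* Vector spaces are k^(mdim x); linear maps are matrices in
   MathComp's row-vector convention (v |-> v *m A), so the map for x <= y is
   mmap x y : 'M_(mdim x, mdim y) and composition x->y->z is A_xy *m A_yz. *)
Record pmod (k : fieldType) (I : Type) := PMod {
  mdim : I -> nat;
  mmap : forall x y : I, 'M[k]_(mdim x, mdim y) }.

Definition is_module (k : fieldType) (I : Type) (R : I -> I -> bool)
    (M : pmod k I) : Prop :=
  (forall x, mmap M x x = 1%:M) /\
  (forall x y z, R x y -> R y z -> mmap M x y *m mmap M y z = mmap M x z).

Definition mod_iso (k : fieldType) (I : Type) (R : I -> I -> bool)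
    (M N : pmod k I) : Prop :=
  exists (phi : forall x, 'M[k]_(mdim M x, mdim N x))
         (psi : forall x, 'M[k]_(mdim N x, mdim M x)),
    (forall x, phi x *m psi x = 1%:M /\ psi x *m phi x = 1%:M) /\
    (forall x y, R x y -> mmap M x y *m phi y = phi x *m mmap N x y).

Definition pullback (k : fieldType) (I J : Type) (F : J -> I) (M : pmod k I)
  : pmod k J := @PMod k J (fun u => mdim M (F u)) (fun u v => mmap M (F u) (F v)).

Definition dsum (k : fieldType) (I : Type) (M N : pmod k I) : pmod k I :=
  @PMod k I (fun x => (mdim M x + mdim N x)%N)
    (fun x y => block_mx (mmap M x y) 0 0 (mmap N x y)).

(* k^{(+) n}: the constant module with value k^n and identity maps
   (the n-fold direct sum of the constant module k). *)
Definition const_pmod (k : fieldType) (I : Type) (n : nat) : pmod k I :=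
  @PMod k I (fun _ => n) (fun _ _ => 1%:M).

(* S^{(+) d}: value k^d everywhere, identity at x = x, zero maps on strict
   relations (the d-fold direct sum of S_P). *)
Definition simple_pmod (k : fieldType) (I : eqType) (d : nat) : pmod k I :=
  @PMod k I (fun _ => d) (fun x y => if x == y then 1%:M else 0).

Section PosetDefs.
Context {disp : Order.disp_t} {T : finPOrderType disp}.
Local Close Scope ring_scope.

Definition covers (x y : T) : bool :=
  (x < y)%O && [forall z : T, ~~ ((x < z)%O && (z < y)%O)].

Definition comp_length_ge (m : nat) : Prop :=
  exists (x : T) (s : seq T), (m <= size s)%N /\ path covers x s.

Definition minimal (x : T) : Prop := forall z : T, (z <= x)%O -> z = x.

Definition hasse_rooted_tree (r : T) : Prop :=
  minimal r /\ (forall m, minimal m -> m = r) /\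
  (forall x, x != r -> exists! y, covers y x).

Definition G1 : Type := {p : T * T | (p.1 < p.2)%O}.
Definition G1_le (u v : G1) : bool := (u == v) || ((val u).2 <= (val v).1)%O.
Definition d0 (u : G1) : T := (val u).2.
Definition d1 (u : G1) : T := (val u).1.
End PosetDefs.

From HB Require Import structures.
From mathcomp Require Import all_boot all_order all_algebra.
Set Implicit Arguments.
Unset Strict Implicit.
Unset Printing Implicit Defensive.
Import Order.TTheory GRing.Theory.
Local Open Scope ring_scope.

(* The isomorphism d0^* M ~= d1^* M intertwines M(b<d) with M(a<c) whenever
   b <= c, so all structure maps M(x<y) have the same rank n, and the kernel of
   M(x<y) does not depend on y.  Choosing a complement B of ker M(r<s) at the
   root, the images of B span a copy of the constant module k^n; at each x the
   common kernel of the outgoing maps (any complement of the image of B if x is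
   maximal) spans the remaining summand, on which all strict maps vanish. *)

Lemma row_free_leq (k : fieldType) m n (A : 'M[k]_(m, n)) :
  row_free A -> (m <= n)%N.
Proof. by rewrite -row_leq_rank => /leq_trans; apply; apply: rank_leq_col. Qed.

Lemma exists_basis (k : fieldType) p q d (A : 'M[k]_(p, q)) :
  \rank A = d -> exists D : 'M[k]_(d, q), (D == A)%MS.
Proof. by move=> <-; exists (row_base A); apply/eqmxP/eq_row_base. Qed.

Lemma mod_iso_of_natural (k : fieldType) (I : Type) (R : I -> I -> bool)
    (M N : pmod k I) (psi : forall x, 'M[k]_(mdim N x, mdim M x)) :
  (forall x, row_free (psi x)) -> (forall x, row_full (psi x)) ->
  (forall x y, R x y -> mmap N x y *m psi y = psi x *m mmap M x y) ->
  mod_iso R M N.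
Proof.
move=> free full psi_nat; exists (fun x => pinvmx (psi x)), psi.
split=> [x|x y Rxy]; first by rewrite mulmxVp ?mulVpmx.
rewrite -[RHS]mulmx1 -(mulmxVp (free y)) !mulmxA -(mulmxA _ (mmap N x y)).
by rewrite psi_nat // mulmxA mulVpmx ?mul1mx.
Qed.

Section RootedPoset.
Context {disp : Order.disp_t} {T : finPOrderType disp}.
Local Open Scope order_scope.

Lemma exists_minimal_le (P : pred T) y :
  P y -> exists2 c, P c && (c <= y) & forall w, P w -> ~~ (w < c).
Proof.
move=> Py; pose below (c : T) := #|[set w | w < c]|.
case: (@arg_minnP _ y (fun c => P c && (c <= y)) below).
  by rewrite Py lexx.
move=> c /andP[Pc cy] c_min; exists c => [|w Pw]; first by rewrite Pc cy.
apply/negP=> wc; have := c_min w; rewrite Pw (le_trans (ltW wc) cy) => /(_ isT).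
apply/negP; rewrite -ltnNge; apply: proper_card; rewrite properE.
apply/andP; split; first by apply/subsetP=> z; rewrite !inE => /lt_trans; apply.
by apply/subsetPn; exists w; rewrite !inE ?wc ?ltxx.
Qed.

Lemma rooted_tree_root_le (r : T) : hasse_rooted_tree r -> forall z, r <= z.
Proof.
case=> _ [root_unique _] z.
have [c /andP[_ cz] c_min] := @exists_minimal_le predT z isT.
suff /root_unique <- : minimal c by [].
move=> w; rewrite le_eqVlt => /predU1P[//|wc].
by have := c_min w isT; rewrite wc.
Qed.

Lemma unique_cover_le (r s : T) :
  (forall c, covers r c -> s = c) -> forall y, r < y -> s <= y.
Proof.
move=> s_unique y ry.
have [c /andP[rc cy] c_min] := @exists_minimal_le (fun c => r < c) y ry.
suff /s_unique-> : covers r c by [].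
apply/andP; split=> //; apply/forallP=> z; apply/negP=> /andP[rz zc].
by have := c_min z rz; rewrite zc.
Qed.

Lemma comp_length_ge3_chain :
  comp_length_ge (T := T) 3 -> exists w x y z : T, [/\ w < x, x < y & y < z].
Proof.
case=> w [s []]; case: s => [|x [|y [|z s]]] //= _.
case/and4P=> /andP[wx _] /andP[xy _] /andP[yz _] _.
by exists w, x, y, z.
Qed.

End RootedPoset.

Section BoundaryIso.
Variables (k : fieldType) (disp : Order.disp_t) (T : finPOrderType disp).
Variable M : pmod k T.
Hypothesis mmap_comp : forall x y z : T, (x <= y)%O -> (y <= z)%O ->
  mmap M x y *m mmap M y z = mmap M x z.

Variable phi : forall u : G1 (T := T), 'M[k]_(mdim M (d0 u), mdim M (d1 u)).
Variable psi : forall u : G1 (T := T), 'M[k]_(mdim M (d1 u), mdim M (d0 u)).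
Hypothesis phi_inv : forall u, phi u *m psi u = 1%:M /\ psi u *m phi u = 1%:M.
Hypothesis phi_natural : forall u v, G1_le u v ->
  mmap M (d0 u) (d0 v) *m phi v = phi u *m mmap M (d1 u) (d1 v).

Let rel {a b : T} (ab : (a < b)%O) : G1 (T := T) := exist _ (a, b) ab.

Let phi_free u : row_free (phi u).
Proof. by apply/row_freeP; exists (psi u); case: (phi_inv u). Qed.

Let phi_full u : row_full (phi u).
Proof. by apply/row_fullP; exists (psi u); case: (phi_inv u). Qed.

Lemma mdim_lt a b : (a < b)%O -> mdim M b = mdim M a.
Proof.
move=> ab; apply/eqP; rewrite eqn_leq (row_free_leq (phi_free (rel ab))).
apply: (row_free_leq (A := psi (rel ab))); apply/row_freeP.
by exists (phi (rel ab)); case: (phi_inv (rel ab)).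
Qed.

Lemma mxrank_mmap_shift a b c d : (a < b)%O -> (b <= c)%O -> (c < d)%O ->
  \rank (mmap M b d) = \rank (mmap M a c).
Proof.
move=> ab bc cd; have := phi_natural (u := rel ab) (v := rel cd).
rewrite /G1_le bc orbT => /(_ isT) /(congr1 mxrank).
by rewrite mxrankMfree // (eqmxMfull _ (phi_full _)).
Qed.

Lemma mmap_factor a x y y' : (a < x)%O -> (x < y)%O -> (x < y')%O ->
  exists2 P, row_free P & mmap M x y' = mmap M x y *m P.
Proof.
move=> ax xy xy'.
have phi_nat_from_x z (xz : (x < z)%O) :
    mmap M x z *m phi (rel xz) = phi (rel ax) *m mmap M a x.
  apply: (phi_natural (u := rel ax) (v := rel xz)).
  by rewrite /G1_le /= lexx orbT.
have [phiK' psiK'] := phi_inv (rel xy'); have [phiK _] := phi_inv (rel xy).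
exists (phi (rel xy) *m psi (rel xy')).
  apply/row_freeP; exists (phi (rel xy') *m psi (rel xy)).
  by rewrite mulmxA -(mulmxA (phi (rel xy))) psiK' mulmx1 phiK.
by rewrite mulmxA phi_nat_from_x -(phi_nat_from_x _ xy') -mulmxA phiK' mulmx1.
Qed.

Variables (r s x2 x3 : T).
Hypothesis r_le : forall z, (r <= z)%O.
Hypothesis rs : (r < s)%O.
Hypothesis s_le : forall y, (r < y)%O -> (s <= y)%O.
Hypotheses (sx2 : (s < x2)%O) (x23 : (x2 < x3)%O).

Let r_lt x : x != r -> (r < x)%O.
Proof. by move=> xr; rewrite lt_neqAle eq_sym xr r_le. Qed.

Lemma mdim_root x : mdim M x = mdim M r.
Proof. by case: (eqVneq x r) => [-> // | /r_lt/mdim_lt]. Qed.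

(* This is where composition length >= 3 is used: for s < z, M(s<z) is
   M(s<x2) times an injective map, and x2 is not maximal. *)
Lemma mxrank_mmap x y : (x < y)%O -> \rank (mmap M x y) = \rank (mmap M r s).
Proof.
have rank_root z : (r < z)%O -> \rank (mmap M r z) = \rank (mmap M r s).
  move=> /s_le; rewrite le_eqVlt => /predU1P[<- // | sz].
  rewrite -(mmap_comp (ltW rs) (ltW sz)).
  have [P P_free ->] := mmap_factor rs sx2 sz.
  rewrite mulmxA mmap_comp ?(ltW rs) ?(ltW sx2) //.
  rewrite mxrankMfree // -(mxrank_mmap_shift rs (ltW sx2) x23).
  exact: mxrank_mmap_shift rs (lexx s) (lt_trans sx2 x23).
move=> xy; case: (eqVneq x r) xy => [-> | /r_lt rx xy]; first exact: rank_root.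
by rewrite (mxrank_mmap_shift rx (lexx x) xy) rank_root.
Qed.

Lemma kermx_mmap x y y' : (x < y)%O -> (x < y')%O ->
  (kermx (mmap M x y) <= kermx (mmap M x y'))%MS.
Proof.
have ker_root z : (r < z)%O -> (kermx (mmap M r s) <= kermx (mmap M r z))%MS.
  move=> rz; rewrite sub_kermx -(mmap_comp (ltW rs) (s_le rz)).
  by rewrite mulmxA mulmx_ker mul0mx.
move=> xy xy'; case: (eqVneq x r) xy xy' => [-> ry ry' | /r_lt rx xy xy'].
  apply: submx_trans (ker_root _ ry').
  rewrite -(mxrank_leqif_sup (ker_root _ ry)).2.
  by rewrite !mxrank_ker !mxrank_mmap.
have [P _ ->] := mmap_factor rx xy xy'.
by rewrite sub_kermx mulmxA mulmx_ker mul0mx.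
Qed.

End BoundaryIso.

Section Splitting.
Variables (k : fieldType) (disp : Order.disp_t) (T : finPOrderType disp).
Variables (M : pmod k T) (r s : T) (n : nat).
Hypothesis M_module : is_module (fun x y : T => (x <= y)%O) M.
Hypothesis r_le : forall z, (r <= z)%O.
Hypothesis rs : (r < s)%O.
Hypothesis mdim_root : forall x, mdim M x = mdim M r.
Hypothesis rank_mmap : forall x y, (x < y)%O -> \rank (mmap M x y) = n.
Hypothesis ker_mmap : forall x y y', (x < y)%O -> (x < y')%O ->
  (kermx (mmap M x y) <= kermx (mmap M x y'))%MS.

Local Notation d := (mdim M r - n)%N.
Local Notation split_pmod := (dsum (const_pmod k T n) (simple_pmod k T d)).

Section ConstantPart.
Variable B : 'M[k]_(n, mdim M r).
Hypothesis B_compl : (B :=: (kermx (mmap M r s))^C)%MS.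

Lemma mxrank_B_mmap x : \rank (B *m mmap M r x) = n.
Proof.
have rank_B : \rank B = n.
  by rewrite B_compl mxrank_compl mxrank_ker subKn ?rank_leq_row ?rank_mmap.
case: (eqVneq x r) => [-> | xr]; first by rewrite M_module.1 mulmx1.
have rx : (r < x)%O by rewrite lt_neqAle eq_sym xr r_le.
rewrite -[RHS]rank_B; apply/mxrank_injP.
rewrite -submx0 -(capmx_compl (kermx (mmap M r s))) capmxC capmxS ?B_compl //.
exact: ker_mmap.
Qed.

Definition simple_part x : 'M[k]_(mdim M x) :=
  if [pick y | (x < y)%O] is Some y then kermx (mmap M x y)
  else (B *m mmap M r x)^C%MS.

Lemma simple_part_kermx x y :
  (x < y)%O -> (simple_part x <= kermx (mmap M x y))%MS.
Proof.
rewrite /simple_part; case: pickP => [y0 xy0 xy | /(_ y) /= -> //].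
exact: ker_mmap.
Qed.

Lemma mxrank_simple_part x : \rank (simple_part x) = d.
Proof.
rewrite /simple_part; case: pickP => [y xy | _].
  by rewrite mxrank_ker rank_mmap // mdim_root.
by rewrite mxrank_compl mxrank_B_mmap mdim_root.
Qed.

Lemma simple_part_disjoint x : (B *m mmap M r x :&: simple_part x)%MS = 0.
Proof.
rewrite /simple_part; case: pickP => [y xy | _]; last exact: capmx_compl.
apply/eqP/mxrank_injP; rewrite -mulmxA M_module.2 ?r_le ?(ltW xy) //.
by rewrite !mxrank_B_mmap.
Qed.

Definition simple_basis x : 'M[k]_(d, mdim M x) :=
  xchoose (exists_basis (mxrank_simple_part x)).

Lemma simple_basis_eqmx x : (simple_basis x :=: simple_part x)%MS.
Proof. exact/eqmxP/(xchooseP (exists_basis (mxrank_simple_part x))). Qed.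

Definition split_mx x : 'M[k]_(n + d, mdim M x) :=
  col_mx (B *m mmap M r x) (simple_basis x).

Lemma mxrank_split_mx x : \rank (split_mx x) = (n + d)%N.
Proof.
rewrite -addsmxE mxrank_disjoint_sum.
  by rewrite mxrank_B_mmap simple_basis_eqmx mxrank_simple_part.
apply/eqP; rewrite -submx0 -(simple_part_disjoint x).
by rewrite capmxS // simple_basis_eqmx.
Qed.

Lemma split_mx_natural x y : (x <= y)%O ->
  mmap split_pmod x y *m split_mx y = split_mx x *m mmap M x y.
Proof.
rewrite le_eqVlt => /predU1P[<- | xy] /=.
  by rewrite eqxx M_module.1 -scalar_mx_block mul1mx mulmx1.
rewrite (lt_eqF xy) mul_block_col mul_col_mx !mul1mx !mul0mx !addr0 -mulmxA.
rewrite M_module.2 ?r_le ?(ltW xy) //; congr col_mx; apply/esym/sub_kermxP.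
by rewrite simple_basis_eqmx simple_part_kermx.
Qed.

Lemma mod_iso_split_mx : mod_iso (fun x y : T => (x <= y)%O) M split_pmod.
Proof.
apply: (mod_iso_of_natural (N := split_pmod) (psi := split_mx)) => [x|x|].
- by rewrite /row_free mxrank_split_mx.
- rewrite /row_full mxrank_split_mx mdim_root subnKC //.
  by rewrite -(rank_mmap rs) rank_leq_row.
- exact: split_mx_natural.
Qed.

End ConstantPart.

Lemma mod_iso_split : mod_iso (fun x y : T => (x <= y)%O) M split_pmod.
Proof.
have [|B /eqmxP B_compl] :=
  exists_basis (A := (kermx (mmap M r s))^C%MS) (d := n).
  by rewrite mxrank_compl mxrank_ker subKn ?rank_leq_row ?rank_mmap.
exact: mod_iso_split_mx B_compl.
Qed.

End Splitting.

Theorem theorem4p9 (k : fieldType) (disp : Order.disp_t)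
  (T : finPOrderType disp) (r : T) (M : pmod k T) :
  comp_length_ge (T := T) 3 ->
  hasse_rooted_tree r ->
  (exists! s : T, covers r s) ->
  is_module (fun x y : T => (x <= y)%O) M ->
  mod_iso G1_le (pullback d0 M) (pullback d1 M) ->
  exists n d : nat,
    mod_iso (fun x y : T => (x <= y)%O) M
      (dsum (const_pmod k T n) (simple_pmod k T d)) /\
    (forall x y : T, (x < y)%O -> \rank (mmap M x y) = n) /\
    (forall x y : T, (x < y)%O -> \rank (kermx (mmap M x y)) = d).
Proof.
move=> chain tree [s [cover_rs s_unique]] M_module.
case=> phi [psi [phi_inv phi_nat]].
have r_le := rooted_tree_root_le tree.
have s_le := unique_cover_le s_unique.
have rs : (r < s)%O by case/andP: cover_rs.
have [w [x [y [z [wx xy yz]]]]] := comp_length_ge3_chain chain.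
have sy : (s < y)%O.
  by apply: le_lt_trans xy; apply/s_le/(le_lt_trans (r_le w) wx).
have mdim_r := mdim_root phi_inv r_le.
have rank_rs := mxrank_mmap M_module.2 phi_inv phi_nat r_le rs s_le sy yz.
have ker_mmap := kermx_mmap M_module.2 phi_inv phi_nat r_le rs s_le sy yz.
exists (\rank (mmap M r s)), (mdim M r - \rank (mmap M r s))%N; split; [|split].
- exact: mod_iso_split M_module r_le rs mdim_r rank_rs ker_mmap.
- exact: rank_rs.
- by move=> a b ab; rewrite mxrank_ker rank_rs // mdim_r.
Qed.
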